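(* Let $\mathcal{X},\mathcal{Y}$ be disjoint finite sets of Boolean variables, $alive\notin\mathcal{X}\cup\mathcal{Y}$ a fresh variable, $\alpha$ a Boolean formula over $\mathcal{X}$, $\phi$ an LTLf formula over $\mathcal{X}\cup\mathcal{Y}$, and $\psi=t(\phi)\wedge alive\wedge(alive\ U\ (G\neg alive))$. Then $\phi$ is $\alpha$-fair realizable if and only if the LTL formula $GF\alpha\rightarrow\psi$ is realizable with respect to $\langle\mathcal{X},\mathcal{Y}\cup\{alive\}\rangle$.
   Context: LTLf formulas: $\phi ::= a \mid \neg\phi \mid \phi_1\wedge\phi_2 \mid X\phi \mid \phi_1 U\phi_2$ with the finite-trace semantics: $\rho,i\models X\phi$ iff $i+1<|\rho|$ and $\rho,i+1\models\phi$; $\rho,i\models\phi_1U\phi_2$ iff there is $j$ with $i\le j<|\rho|$, $\rho,j\models\phi_2$ and $\rho,k\models\phi_1$ for $i\le k<j$; atoms and Boolean connectives as usual; $\rho\models\phi$ iff $\rho,0\models\phi$. LTL: same syntax plus $F,G$, standard semantics over infinite traces. Translation $t$: $t(a)=a$; $t(\neg\phi_1)=\neg t(\phi_1)$; $t(\phi_1\wedge\phi_2)=t(\phi_1)\wedge t(\phi_2)$; $t(X\phi)=X(alive\wedge t(\phi))$; $t(\phi_1U\phi_2)=t(\phi_1)\,U\,(alive\wedge t(\phi_2))$. $\alpha$-fair realizability: $\phi$ is $\alpha$-fair realizable if there is $g:(2^{\mathcal{X}})^+\to 2^{\mathcal{Y}}$ such that for every $\lambda=X_0,X_1,\ldots\in(2^{\mathcal{X}})^\omega$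 with $X_j\models\alpha$ for infinitely many $j$, there is $k\ge0$ with $\phi$ true in $(X_0\cup g(X_0)),\ldots,(X_k\cup g(X_0,\ldots,X_k))$. LTL realizability: an LTL formula $\Psi$ over $\mathcal{X}\cup\mathcal{Y}'$ ($\mathcal{X},\mathcal{Y}'$ disjoint) is realizable with respect to $\langle\mathcal{X},\mathcal{Y}'\rangle$ if there is $f:(2^{\mathcal{X}})^+\to 2^{\mathcal{Y}'}$ such that for every $\lambda=X_0,X_1,\ldots\in(2^{\mathcal{X}})^\omega$, $\Psi$ holds on the infinite trace $(X_0\cup f(X_0)),(X_1\cup f(X_0,X_1)),(X_2\cup f(X_0,X_1,X_2)),\ldots$. *)

From mathcomp Require Import all_boot.
Set Implicit Arguments. Unset Strict Implicit. Unset Printing Implicit Defensive.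

Inductive bform (A : Type) : Type :=
| BAtom of A
| BNeg of bform A
| BAnd of bform A & bform A.

Fixpoint beval (A : Type) (f : bform A) (v : A -> bool) : bool :=
  match f with
  | BAtom a => v a
  | BNeg f1 => ~~ beval f1 v
  | BAnd f1 f2 => beval f1 v && beval f2 v
  end.

Inductive ltlf (A : Type) : Type :=
| FAtom of A
| FNeg of ltlf A
| FAnd of ltlf A & ltlf A
| FNext of ltlf A
| FUntil of ltlf A & ltlf A.

Fixpoint ltlf_sat (A : Type) (rho : seq (A -> bool)) (i : nat) (f : ltlf A) : Prop :=
  match f with
  | FAtom a => nth (fun _ => false) rho i a = true
  | FNeg f1 => ~ ltlf_sat rho i f1
  | FAnd f1 f2 => ltlf_sat rho i f1 /\ ltlf_sat rho i f2
  | FNext f1 => i.+1 < size rho /\ ltlf_sat rho i.+1 f1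
  | FUntil f1 f2 => exists j, i <= j /\ j < size rho /\ ltlf_sat rho j f2 /\
                      forall k, i <= k -> k < j -> ltlf_sat rho k f1
  end.

Definition ltlf_models (A : Type) (rho : seq (A -> bool)) (f : ltlf A) : Prop :=
  ltlf_sat rho 0 f.

Inductive ltl (A : Type) : Type :=
| LAtom of A
| LNeg of ltl A
| LAnd of ltl A & ltl A
| LNext of ltl A
| LUntil of ltl A & ltl A
| LF of ltl A
| LG of ltl A.

Fixpoint ltl_sat (A : Type) (w : nat -> A -> bool) (i : nat) (f : ltl A) : Prop :=
  match f with
  | LAtom a => w i a = true
  | LNeg f1 => ~ ltl_sat w i f1
  | LAnd f1 f2 => ltl_sat w i f1 /\ ltl_sat w i f2
  | LNext f1 => ltl_sat w i.+1 f1
  | LUntil f1 f2 => exists j, i <= j /\ ltl_sat w j f2 /\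
                      forall k, i <= k -> k < j -> ltl_sat w k f1
  | LF f1 => exists j, i <= j /\ ltl_sat w j f1
  | LG f1 => forall j, i <= j -> ltl_sat w j f1
  end.

Definition ltl_models (A : Type) (w : nat -> A -> bool) (f : ltl A) : Prop :=
  ltl_sat w 0 f.

Definition LImp (A : Type) (f g : ltl A) : ltl A := LNeg (LAnd f (LNeg g)).

Fixpoint bform_to_ltl (A B : Type) (e : A -> B) (f : bform A) : ltl B :=
  match f with
  | BAtom a => LAtom (e a)
  | BNeg f1 => LNeg (bform_to_ltl e f1)
  | BAnd f1 f2 => LAnd (bform_to_ltl e f1) (bform_to_ltl e f2)
  end.

(* Atoms of the LTL side: X + (Y ∪ {alive}), with alive := inr None,
   which is fresh (distinct from all embedded X and Y atoms). *)
Definition atomXY (X Y : Type) : Type := (X + Y)%type.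
Definition atomXYa (X Y : Type) : Type := (X + option Y)%type.

Definition alive (X Y : Type) : atomXYa X Y := inr None.

Definition embed_atom (X Y : Type) (v : atomXY X Y) : atomXYa X Y :=
  match v with inl x => inl x | inr y => inr (Some y) end.

Fixpoint tr (X Y : Type) (f : ltlf (atomXY X Y)) : ltl (atomXYa X Y) :=
  match f with
  | FAtom a => LAtom (embed_atom a)
  | FNeg f1 => LNeg (tr f1)
  | FAnd f1 f2 => LAnd (tr f1) (tr f2)
  | FNext f1 => LNext (LAnd (LAtom (alive X Y)) (tr f1))
  | FUntil f1 f2 => LUntil (tr f1) (LAnd (LAtom (alive X Y)) (tr f2))
  end.

Definition psi (X Y : Type) (phi : ltlf (atomXY X Y)) : ltl (atomXYa X Y) :=
  LAnd (tr phi)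
       (LAnd (LAtom (alive X Y))
             (LUntil (LAtom (alive X Y)) (LG (LNeg (LAtom (alive X Y)))))).

Definition fair_formula (X Y : Type) (alpha : bform X) (phi : ltlf (atomXY X Y))
  : ltl (atomXYa X Y) :=
  LImp (LG (LF (bform_to_ltl (fun x : X => (inl x : atomXYa X Y)) alpha))) (psi phi).

(* Prefix X_0,...,X_j of an input sequence (always nonempty). Strategies are
   functions on seq (X -> bool); only their values on nonempty sequences matter. *)
Definition prefix (X : Type) (lam : nat -> X -> bool) (j : nat) : seq (X -> bool) :=
  [seq lam i | i <- iota 0 j.+1].

Definition joinXY (X Y : Type) (xi : X -> bool) (yo : Y -> bool) : atomXY X Y -> bool :=
  fun v => match v with inl x => xi x | inr y => yo y end.

Definition joinXYa (X Y : Type) (xi : X -> bool) (yo : option Y -> bool)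
  : atomXYa X Y -> bool :=
  fun v => match v with inl x => xi x | inr y => yo y end.

Definition fair_realizable (X Y : Type) (alpha : bform X) (phi : ltlf (atomXY X Y)) : Prop :=
  exists g : seq (X -> bool) -> (Y -> bool),
    forall lam : nat -> X -> bool,
      (forall n, exists j, n <= j /\ beval alpha (lam j)) ->
      exists k, ltlf_models
        [seq joinXY (lam j) (g (prefix lam j)) | j <- iota 0 k.+1] phi.

Definition ltl_realizable (X Y : Type) (Psi : ltl (atomXYa X Y)) : Prop :=
  exists f : seq (X -> bool) -> (option Y -> bool),
    forall lam : nat -> X -> bool,
      ltl_models (fun j => joinXYa (lam j) (f (prefix lam j))) Psi.

From Pilot Require Import Defs.
From mathcomp Require Import all_boot.
From mathcomp Require Import zify.
From Stdlib Require Import Classical ClassicalEpsilon Wf_nat.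
Set Implicit Arguments. Unset Strict Implicit.

(* The translation t is faithful on every infinite word whose alive-positions
   form an initial segment [0, K]: there t(phi) holds at i <= K iff phi holds at
   i on the finite trace read off [0, K]; and psi forces exactly this shape.
   A fair LTLf strategy g is turned into an LTL strategy by copying its outputs
   and keeping alive up as long as no strictly shorter play satisfied phi, so
   alive drops right after the least satisfying play; conversely an LTL strategy
   is projected onto Y, and its play dies at a point where phi holds. *)

Section Translation.
Variables X Y : Type.
Implicit Types (w : nat -> atomXYa X Y -> bool) (rho : seq (atomXY X Y -> bool)).

Definition alive_upto w K := forall j, w j (alive X Y) = true <-> j <= K.

Definition agrees_upto w rho K :=
  forall i a, i <= K -> w i (embed_atom a) = nth (fun _ => false) rho i a.

Lemma ltl_sat_tr w rho K : size rho = K.+1 -> alive_upto w K -> agrees_upto w rho K ->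
  forall phi i, i <= K -> ltl_sat w i (tr phi) <-> ltlf_sat rho i phi.
Proof.
move=> size_rho aliveK agreeK.
elim=> [a|f IH|f1 IH1 f2 IH2|f IH|f1 IH1 f2 IH2] i le_iK /=.
- by rewrite agreeK.
- by rewrite IH.
- by rewrite IH1 // IH2.
- rewrite aliveK size_rho; split=> -[le_iK1 Hf]; split=> //.
  + by rewrite -IH.
  + by rewrite IH.
- rewrite size_rho; split=> -[j [le_ij Hj]].
  + move: Hj => [[/aliveK le_jK H2] H1].
    exists j; split=> //; split=> //; split; first by rewrite -IH2.
    by move=> k le_ik lt_kj; rewrite -IH1; [apply: H1 | lia].
  + move: Hj => [lt_jK [H2 H1]]; have le_jK : j <= K by lia.
    exists j; split=> //; split; first by split; [apply/aliveK | rewrite IH2].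
    by move=> k le_ik lt_kj; rewrite IH1; [apply: H1 | lia].
Qed.

Lemma alive_upto_psi_shape w K : alive_upto w K ->
  ltl_sat w 0 (LAtom (alive X Y)) /\
  ltl_sat w 0 (LUntil (LAtom (alive X Y)) (LG (LNeg (LAtom (alive X Y))))).
Proof.
move=> aliveK; split; first exact/aliveK.
exists K.+1; do 2!split=> //.
- by move=> j lt_Kj /aliveK; lia.
- by move=> k _ le_kK; apply/aliveK.
Qed.

Lemma psi_alive_upto w phi : ltl_sat w 0 (psi phi) -> exists K, alive_upto w K.
Proof.
move=> /= [_ [alive0 [j [_ [dead_j alive_lt_j]]]]].
have j_gt0 : 0 < j by case: j dead_j alive_lt_j => // /(_ 0 (leqnn 0)).
exists j.-1 => i; split=> [alive_i | le_i].
- by case: (leqP i j.-1) => // lt_i; case: (dead_j i); [lia | ].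
- by apply: alive_lt_j; lia.
Qed.

Lemma ltl_sat_psi w rho K phi : size rho = K.+1 -> alive_upto w K ->
  agrees_upto w rho K -> ltl_sat w 0 (psi phi) <-> ltlf_models rho phi.
Proof.
move=> size_rho aliveK agreeK; rewrite /psi /=.
rewrite (ltl_sat_tr size_rho aliveK agreeK) //.
by split=> [[] // | Hphi]; split=> //; apply: alive_upto_psi_shape.
Qed.

Lemma ltl_sat_bform w (lam : nat -> X -> bool) j (alpha : bform X) :
  (forall x, w j (inl x) = lam j x) ->
  ltl_sat w j (bform_to_ltl (fun x : X => (inl x : atomXYa X Y)) alpha)
  <-> beval alpha (lam j).
Proof.
move=> wX; elim: alpha => [x|a IH|a1 IH1 a2 IH2] /=.
- by rewrite wX.
- by rewrite IH; split=> /negP.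
- by rewrite IH1 IH2; split=> [[-> ->] | /andP].
Qed.

Lemma ltl_sat_fair_formula w (lam : nat -> X -> bool) alpha phi :
  (forall j x, w j (inl x) = lam j x) ->
  ltl_models w (fair_formula alpha phi) <->
  ((forall n, exists j, n <= j /\ beval alpha (lam j)) -> ltl_sat w 0 (psi phi)).
Proof.
move=> wX; have sat_alpha j := ltl_sat_bform alpha (wX j).
rewrite /ltl_models /fair_formula /LImp /=; split=> [not_fair_not_psi fair | fair_psi].
- apply: NNPP => not_psi; apply: not_fair_not_psi; split=> // n _.
  by have [j [le_nj /sat_alpha]] := fair n; exists j.
- move=> [GF_alpha]; apply; apply: fair_psi => n.
  by have [j [le_nj /sat_alpha]] := GF_alpha n (leq0n n); exists j.
Qed.

End Translation.

Section Plays.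
Variables X Y : Type.
Implicit Types (lam : nat -> X -> bool) (g : seq (X -> bool) -> Y -> bool).

Lemma size_prefix lam j : size (Defs.prefix lam j) = j.+1.
Proof. by rewrite size_map size_iota. Qed.

Lemma nth_prefix lam j i d : i <= j -> nth d (Defs.prefix lam j) i = lam i.
Proof. by move=> le_ij; rewrite (nth_map 0) ?size_iota // nth_iota. Qed.

Lemma take_prefix lam j i : i <= j -> take i.+1 (Defs.prefix lam j) = Defs.prefix lam i.
Proof.
by move=> le_ij; rewrite /Defs.prefix -map_take take_iota; congr (map _ (iota _ _)); lia.
Qed.

Definition play g lam k := [seq joinXY (lam j) (g (Defs.prefix lam j)) | j <- iota 0 k.+1].

Definition replay g (s : seq (X -> bool)) k :=
  [seq joinXY (nth (fun _ => false) s i) (g (take i.+1 s)) | i <- iota 0 k.+1].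

Lemma size_play g lam k : size (play g lam k) = k.+1.
Proof. by rewrite size_map size_iota. Qed.

Lemma nth_play g lam k i : i <= k ->
  nth (fun _ => false) (play g lam k) i = joinXY (lam i) (g (Defs.prefix lam i)).
Proof. by move=> le_ik; rewrite (nth_map 0) ?size_iota ?nth_iota //; lia. Qed.

Lemma replay_prefix g lam j k : k <= j -> replay g (Defs.prefix lam j) k = play g lam k.
Proof.
move=> le_kj; apply/eq_in_map => i; rewrite mem_iota => /andP [_ lt_ik].
by rewrite nth_prefix ?take_prefix //; lia.
Qed.

Definition alive_strategy g (phi : ltlf (atomXY X Y)) (s : seq (X -> bool))
  (o : option Y) : bool :=
  match o with
  | Some y => g s y
  | None => if excluded_middle_informative
                 (forall k, k < (size s).-1 -> ~ ltlf_models (replay g s k) phi)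
            then true else false
  end.

Lemma alive_strategy_prefix g phi lam j :
  alive_strategy g phi (Defs.prefix lam j) None = true <->
  forall k, k < j -> ~ ltlf_models (play g lam k) phi.
Proof.
rewrite /alive_strategy size_prefix /=.
case: excluded_middle_informative => [no_replay_sat | replay_sat].
- by split=> // _ k lt_kj; rewrite -(replay_prefix g lam (ltnW lt_kj)); apply: no_replay_sat.
- by split=> // no_sat; case: replay_sat => k lt_kj; rewrite (replay_prefix g lam (ltnW lt_kj)); apply: no_sat.
Qed.

End Plays.

Lemma ex_least_nat (P : nat -> Prop) :
  (exists n, P n) -> exists n, P n /\ forall m, m < n -> ~ P m.
Proof.
move=> exP; have [n [[Pn least_n] _]] :=
  @dec_inh_nat_subset_has_unique_least_element P (fun n => classic (P n)) exP.
by exists n; split=> // m lt_mn /least_n /leP; lia.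
Qed.

Theorem mainTheorem8 (X Y : finType) (alpha : bform X) (phi : ltlf (atomXY X Y)) :
  fair_realizable alpha phi <-> ltl_realizable (fair_formula alpha phi).
Proof.
split=> [[g fair_g] | [f real_f]].
- exists (alive_strategy g phi) => lam.
  set w := fun j => joinXYa (lam j) (alive_strategy g phi (Defs.prefix lam j)).
  apply/(@ltl_sat_fair_formula _ _ w lam) => // fair.
  have [K [sat_K least_K]] := ex_least_nat (fair_g lam fair).
  have aliveK : alive_upto w K.
    move=> j; rewrite [w _ _]/= alive_strategy_prefix.
    split=> [no_sat | le_jK k lt_kj]; last by apply: least_K; lia.
    by case: (leqP j K) => // /no_sat.
  have agreeK : agrees_upto w (play g lam K) K by move=> i [x|y] le_iK; rewrite nth_play.
  exact/(ltl_sat_psi _ (size_play g lam K) aliveK agreeK).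
- pose g s y := f s (Some y); exists g => lam fair.
  set w := fun j => joinXYa (lam j) (f (Defs.prefix lam j)).
  have sat_psi : ltl_sat w 0 (psi phi).
    by apply: (ltl_sat_fair_formula (w := w) alpha phi (fun j x => erefl)).1 (real_f lam) fair.
  have [K aliveK] := psi_alive_upto sat_psi.
  have agreeK : agrees_upto w (play g lam K) K by move=> i [x|y] le_iK; rewrite nth_play.
  by exists K; apply/(ltl_sat_psi _ (size_play g lam K) aliveK agreeK).
Qed.
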